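(* Let $\mathcal{M}_1,\mathcal{M}_2$ be transducers over input alphabet $\Sigma$ and output alphabet $\Gamma$, and let $\mathcal{A}_{\mathit{Up}}$ be a deterministic finite automaton recognizing a language $\mathit{Up}\subseteq\Sigma^*$. If $\llbracket\mathcal{M}_1\rrbracket_{|\mathit{Up}}\neq\llbracket\mathcal{M}_2\rrbracket_{|\mathit{Up}}$, then there exists $u\in\mathit{Up}$ with $|u|\leq 2\cdot(|\mathcal{M}_1|\cdot|\mathcal{M}_2|\cdot|\mathcal{A}_{\mathit{Up}}|)^2$ on which $\llbracket\mathcal{M}_1\rrbracket$ and $\llbracket\mathcal{M}_2\rrbracket$ differ, i.e. $u$ lies in exactly one of $\mathrm{dom}(\llbracket\mathcal{M}_1\rrbracket)$, $\mathrm{dom}(\llbracket\mathcal{M}_2\rrbracket)$, or $u$ lies in both and $\llbracket\mathcal{M}_1\rrbracket(u)\neq\llbracket\mathcal{M}_2\rrbracket(u)$.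
   Context: A (subsequential string) transducer is a tuple $\mathcal{M}=(\Sigma,\Gamma,Q,q_0,w_0,\delta,\delta_F)$ with finite input alphabet $\Sigma$, finite output alphabet $\Gamma$, finite state set $Q$, initial state $q_0$, initial production $w_0\in\Gamma^*$, partial transition function $\delta:Q\times\Sigma\to Q\times\Gamma^*$ (write $q\xrightarrow{a|w}q'$ when $\delta(q,a)=(q',w)$) and partial final function $\delta_F:Q\to\Gamma^*$ ($q$ is final if $\delta_F(q)$ is defined). Runs are extended to words: $q\xrightarrow{\varepsilon|\varepsilon}{}^*q$, and if $q\xrightarrow{u|w}{}^*q'$ and $q'\xrightarrow{a|w'}q''$ then $q\xrightarrow{ua|ww'}{}^*q''$. The partial function $\llbracket\mathcal{M}\rrbracket:\Sigma^*\to\Gamma^*$ is $\llbracket\mathcal{M}\rrbracket(u)=w_0\,w\,\delta_F(q)$ if $q_0\xrightarrow{u|w}{}^*q$ with $q$ final, and undefined otherwise; $\mathrm{dom}$ denotes its domain and $\llbracket\mathcal{M}\rrbracket_{|L}$ its restriction to a language $L$ (restrictions are compared as partial functions). $|\mathcal{M}|$ is the number of states of $\mathcal{M}$ and $|\mathcal{A}_{\mathit{Up}}|$ the number of states of $\mathcal{A}_{\mathit{Up}}$. *)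

From mathcomp Require Import all_boot.
Set Implicit Arguments. Unset Strict Implicit. Unset Printing Implicit Defensive.

Record transducer (Sigma : finType) (Gamma : finType) := Transducer {
  tstate : finType;
  tinit : tstate;
  tinit_out : seq Gamma;
  tdelta : tstate -> Sigma -> option (tstate * seq Gamma);
  tfinal : tstate -> option (seq Gamma)
}.

Fixpoint trun (Sigma : finType) (Gamma : finType) (M : transducer Sigma Gamma)
    (q : tstate M) (u : seq Sigma) : option (tstate M * seq Gamma) :=
  match u with
  | [::] => Some (q, [::])
  | a :: u' =>
      match @tdelta Sigma Gamma M q a with
      | None => None
      | Some (q1, w1) =>
          match @trun Sigma Gamma M q1 u' with
          | None => None
          | Some (q2, w2) => Some (q2, w1 ++ w2)
          end
      end
  end.

Definition tsem (Sigma : finType) (Gamma : finType) (M : transducer Sigma Gamma)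
    (u : seq Sigma) : option (seq Gamma) :=
  match @trun Sigma Gamma M (@tinit Sigma Gamma M) u with
  | None => None
  | Some (q, w) =>
      match @tfinal Sigma Gamma M q with
      | None => None
      | Some wf => Some (@tinit_out Sigma Gamma M ++ w ++ wf)
      end
  end.

Definition trans_size (Sigma : finType) (Gamma : finType) (M : transducer Sigma Gamma) :=
  #|tstate M|.

Record dfa (Sigma : finType) := DFA {
  dstate : finType;
  dinit : dstate;
  ddelta : dstate -> Sigma -> dstate;
  dfinal : pred dstate
}.

Definition daccept (Sigma : finType) (A : dfa Sigma) (u : seq Sigma) : bool :=
  @dfinal Sigma A (foldl (@ddelta Sigma A) (@dinit Sigma A) u).

Definition dfa_size (Sigma : finType) (A : dfa Sigma) := #|dstate A|.

Definition restrict (Sigma : finType) (Gamma : finType)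
    (f : seq Sigma -> option (seq Gamma)) (L : pred (seq Sigma)) :
    seq Sigma -> option (seq Gamma) :=
  fun u => if L u then f u else None.

From mathcomp Require Import all_boot zify.
From Stdlib Require List Classical_Prop FunctionalExtensionality.
Set Implicit Arguments. Unset Strict Implicit. Unset Printing Implicit Defensive.

(* Short distinguishing words for two transducers restricted to a regular
   language (a pumping argument on the product automaton M1 x M2 x A_Up).

   Let N = |M1| |M2| |A_Up|.  We show that any accepted word u on which the
   two transducers differ and with |u| >= 2N can be replaced by a strictly
   shorter such word; a shortest witness therefore has length < 2N <= 2N^2.
   - If both runs on u are defined, two pigeonholes on the N product states
     reached by prefixes give u = x y m z w where y and z are loops of the
     product automaton.  Each transducer then outputs words of the shape
     a b^i c d^j e on x y^i m z^j w (i, j in {0,1}), and a combinatorial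
     lemma on words (cat_insert) shows that outputs agreeing on the three
     corners (0,0), (1,0), (0,1) also agree on (1,1); so one of the three
     shorter words still distinguishes the transducers.
   - If the run of one transducer dies on u while the other transducer is
     defined on u, one pigeonhole (the dead run contributing at most |M1|+1
     states) gives a loop y whose removal preserves all three states. *)

Section Words.
Variable T : Type.
Implicit Types a b c d e p q x y m z w u : seq T.

Definition pump x y m z w (i j : bool) : seq T :=
  x ++ (if i then y else [::]) ++ m ++ (if j then z else [::]) ++ w.

Lemma size_pump_lt x y m z w i j :
  0 < size y -> 0 < size z -> (i, j) != (true, true) ->
  size (pump x y m z w i j) < size (pump x y m z w true true).
Proof. by move=> y0 z0; case: i; case: j => // _; rewrite /pump !size_cat /=; lia. Qed.

Lemma cat_eq_cat a1 p1 a2 p2 : a1 ++ p1 = a2 ++ p2 ->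
  exists t, a1 = a2 ++ t /\ p2 = t ++ p1 \/ a2 = a1 ++ t /\ p1 = t ++ p2.
Proof. exact: List.app_eq_app. Qed.

Lemma cat_cancel_l s p1 p2 : s ++ p1 = s ++ p2 -> p1 = p2.
Proof. exact: List.app_inv_head. Qed.

Lemma cat_cancel_r s p1 p2 : p1 ++ s = p2 ++ s -> p1 = p2.
Proof. exact: List.app_inv_tail. Qed.

(* Inserting b1 (resp. b2) after a1 (resp. a2) preserves an equality of
   words once it does so for one suffix: writing a1 = a2 t, the hypotheses
   force t b1 = b2 t, which transfers to every suffix. *)
Lemma cat_insert a1 b1 p1 q1 a2 b2 p2 q2 :
  a1 ++ p1 = a2 ++ p2 -> a1 ++ b1 ++ p1 = a2 ++ b2 ++ p2 ->
  a1 ++ q1 = a2 ++ q2 -> a1 ++ b1 ++ q1 = a2 ++ b2 ++ q2.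
Proof.
have shift a t b b' p q q' : (a ++ t) ++ b ++ p = a ++ b' ++ t ++ p ->
    (a ++ t) ++ q = a ++ q' -> (a ++ t) ++ b ++ q = a ++ b' ++ q'.
  rewrite -!catA => /cat_cancel_l eb /cat_cancel_l <-.
  have tb : t ++ b = b' ++ t by apply: (@cat_cancel_r p); rewrite -!catA.
  by rewrite (catA t) tb -catA.
case/cat_eq_cat => t [[-> ->] | [-> ->]] e2 e3; first exact: shift e2 e3.
by symmetry; apply: shift (esym e2) (esym e3).
Qed.

(* Pigeonhole on prefixes: among the prefixes of u of length 0..#|K|, two
   have the same image under F, which cuts u as x y w with y a non-empty
   "loop" of F ending within the first #|K| letters. *)
Lemma prefix_pigeon (K : finType) (F : seq T -> K) u : #|K| <= size u ->
  exists x y w, [/\ u = x ++ y ++ w, 0 < size y, size (x ++ y) <= #|K|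
                  & F (x ++ y) = F x].
Proof.
move=> long; pose G (k : 'I_#|K|.+1) := F (take k u).
have /injectivePn [k [l ne_kl eGkl]] : ~~ injectiveb G.
  by apply/injectiveP => /leq_card; rewrite card_ord ltnn.
wlog lt_kl : k l ne_kl eGkl / k < l.
  move=> H; case: (ltngtP k l) => [lt_kl|lt_lk|eq_kl]; first exact: H lt_kl.
    by apply: (H l k) => //; rewrite eq_sym.
  by move/val_inj: eq_kl ne_kl => ->; rewrite eqxx.
have le_lu : l <= size u by apply: leq_trans long; rewrite -ltnS.
have le_lK : l <= #|K| by rewrite -ltnS.
have take_l : take k u ++ take (l - k) (drop k u) = take l u.
  by rewrite -takeD subnKC // ltnW.
exists (take k u), (take (l - k) (drop k u)), (drop l u); split.
- by rewrite catA take_l cat_take_drop.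
- by rewrite size_takel ?size_drop; lia.
- by rewrite take_l size_take_min; lia.
- by rewrite take_l; exact: esym.
Qed.

End Words.

(* A family of (partial) outputs indexed by the two pumping bits has the
   shape produced by a transducer run through two loops. *)
Definition pump_shaped (G : Type) (f : bool -> bool -> option (seq G)) :=
  exists a b c d (fo : option (seq G)),
    forall i j, f i j = omap (fun e => pump a b c d e i j) fo.

(* Two pump-shaped families differing at (1,1) already differ at one of the
   three other corners; this is cat_insert with p := c e and q := c d e. *)
Lemma pump_shaped_disagree (G : eqType) (f1 f2 : bool -> bool -> option (seq G)) :
  pump_shaped f1 -> pump_shaped f2 -> f1 true true <> f2 true true ->
  exists i j, (i, j) != (true, true) /\ f1 i j <> f2 i j.
Proof.
move=> [a1 [b1 [c1 [d1 [fo1 shape1]]]]] [a2 [b2 [c2 [d2 [fo2 shape2]]]]] ne11.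
have [e00|/eqP ne00] := eqVneq (f1 false false) (f2 false false); last by exists false, false.
have [e10|/eqP ne10] := eqVneq (f1 true false) (f2 true false); last by exists true, false.
have [e01|/eqP ne01] := eqVneq (f1 false true) (f2 false true); last by exists false, true.
case: ne11; rewrite !shape1 !shape2 in e00 e10 e01 *.
case: fo1 fo2 {shape1 shape2} e00 e10 e01 => [e1|] [e2|] //= [e00] [e10] [e01].
by congr Some; apply: cat_insert e00 e10 e01.
Qed.

Section RightCongruence.
Variables (T S : Type) (st : seq T -> S).
Hypothesis st_congr : forall x x' w, st x = st x' -> st (x ++ w) = st (x' ++ w).

Lemma st_cut x y w : st (x ++ y) = st x -> st (x ++ y ++ w) = st (x ++ w).
Proof. by move=> e; rewrite catA; apply: st_congr. Qed.

Lemma st_pump x y m z w i j :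
  st (x ++ y) = st x -> st (x ++ y ++ m ++ z) = st (x ++ y ++ m) ->
  st (pump x y m z w i j) = st (pump x y m z w true true).
Proof.
move=> loop_y loop_z.
have cut_y v : st (x ++ y ++ v) = st (x ++ v) := st_cut v loop_y.
have cut_z v : st (x ++ m ++ z ++ v) = st (x ++ m ++ v).
  by have := @st_cut (x ++ m) z v; rewrite -!catA; apply; rewrite -(cut_y (m ++ z)) -(cut_y m).
by case: i; case: j; rewrite /pump /= !(cut_y, cut_z).
Qed.

End RightCongruence.

Section Runs.
Variables (Sigma Gamma : finType) (M : transducer Sigma Gamma).
Implicit Types (q p r : tstate M) (x y m z w v : seq Sigma) (o : seq Gamma).

Lemma trun_cat q x y : trun q (x ++ y) =
  if trun q x is Some (p, o) then omap (fun res => (res.1, o ++ res.2)) (trun p y)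
  else None.
Proof.
elim: x q => [|a x IH] q /=; first by case: trun => [[]|].
case: tdelta => [[q1 o1]|] //; rewrite IH.
case: (trun q1 x) => [[p o]|] //=.
by case: (trun p y) => [[r o']|] //=; rewrite catA.
Qed.

Lemma trun_join q x y p r o1 o2 :
  trun q x = Some (p, o1) -> trun p y = Some (r, o2) ->
  trun q (x ++ y) = Some (r, o1 ++ o2).
Proof. by move=> hx hy; rewrite trun_cat hx hy. Qed.

Lemma trun_split q x y r o : trun q (x ++ y) = Some (r, o) ->
  exists p o1 o2, [/\ trun q x = Some (p, o1), trun p y = Some (r, o2) & o = o1 ++ o2].
Proof.
rewrite trun_cat; case: (trun q x) => [[p o1]|] //.
by case Hy: (trun p y) => [[r' o2]|] //= [<- <-]; exists p, o1, o2.
Qed.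

Lemma trun_loop p y o (i : bool) : trun p y = Some (p, o) ->
  trun p (if i then y else [::]) = Some (p, if i then o else [::]).
Proof. by case: i. Qed.

Definition reach q v : option (tstate M) := omap fst (trun q v).

Lemma reach_trun q v p o : trun q v = Some (p, o) -> reach q v = Some p.
Proof. by rewrite /reach => ->. Qed.

Lemma reach_cat q x y : reach q (x ++ y) = obind (reach ^~ y) (reach q x).
Proof. by rewrite /reach trun_cat; case: (trun q x) => [[p o]|] //=; case: trun. Qed.

Lemma reach_congr q x x' w : reach q x = reach q x' -> reach q (x ++ w) = reach q (x' ++ w).
Proof. by rewrite !reach_cat => ->. Qed.

Lemma reach_None q v : (reach q v == None) = (trun q v == None).
Proof. by rewrite /reach; case: trun. Qed.

Lemma reach_prefix q x w : trun q (x ++ w) <> None -> reach q x <> None.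
Proof. by rewrite trun_cat /reach; case: (trun q x) => [[]|]. Qed.

Lemma reach_loop q x y p p' o o' :
  trun q x = Some (p, o) -> trun p y = Some (p', o') -> reach q (x ++ y) = reach q x -> p' = p.
Proof. by move=> hx hy; rewrite (reach_trun (trun_join hx hy)) (reach_trun hx) => -[]. Qed.

(* Along a defined run, states totalized by a default value can be compared
   as partial states. *)
Lemma reach_loop_alive q x y w : trun q (x ++ y ++ w) <> None ->
  odflt q (reach q (x ++ y)) = odflt q (reach q x) -> reach q (x ++ y) = reach q x.
Proof.
move=> alive; have := reach_prefix alive.
have : reach q (x ++ y) <> None by apply: (@reach_prefix _ _ w); rewrite -catA.
by case: (reach q (x ++ y)) => // ? _; case: (reach q x) => //= ? _ ->.
Qed.

Lemma tsem_alive v : tsem M v <> None -> trun (tinit M) v <> None.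
Proof. by rewrite /tsem; case: trun. Qed.

Lemma tsem_dead v : trun (tinit M) v = None -> tsem M v = None.
Proof. by rewrite /tsem => ->. Qed.

Lemma tsem_None_reach v v' : reach (tinit M) v = reach (tinit M) v' ->
  (tsem M v == None) = (tsem M v' == None).
Proof.
rewrite /tsem /reach.
by case: (trun _ v) => [[p o]|]; case: (trun _ v') => [[p' o']|] //= [->]; case: tfinal.
Qed.

Lemma tsem_pump x y m z w :
  trun (tinit M) (x ++ y ++ m ++ z ++ w) <> None ->
  reach (tinit M) (x ++ y) = reach (tinit M) x ->
  reach (tinit M) (x ++ y ++ m ++ z) = reach (tinit M) (x ++ y ++ m) ->
  pump_shaped (fun i j => tsem M (pump x y m z w i j)).
Proof.
case Hu: trun => [[r o]|] // _ loop_y loop_z.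
have [p [a [? [Hx Hu1 _]]]] := trun_split Hu.
have [p1 [b [? [Hy Hu2 _]]]] := trun_split Hu1.
have [p2 [c [? [Hm Hu3 _]]]] := trun_split Hu2.
have [p3 [d [e [Hz Hw _]]]] := trun_split Hu3.
have ep1 := reach_loop Hx Hy loop_y; subst p1.
have Hxym := trun_join Hx (trun_join Hy Hm).
have ep3 : p3 = p2 by apply: (reach_loop Hxym Hz); rewrite -!catA.
subst p3.
exists (tinit_out M ++ a), b, c, d, (omap (cat e) (tfinal r)) => i j.
rewrite /tsem (trun_join Hx (trun_join (trun_loop i Hy)
  (trun_join Hm (trun_join (trun_loop j Hz) Hw)))).
by case: tfinal => //= f; rewrite /pump -!catA.
Qed.

End Runs.

Definition dreach (Sigma : finType) (A : dfa Sigma) (v : seq Sigma) : dstate A :=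
  foldl (@ddelta _ A) (dinit A) v.

Lemma daccept_dreach (Sigma : finType) (A : dfa Sigma) v :
  daccept A v = dfinal (dreach A v).
Proof. by []. Qed.

Lemma dreach_congr (Sigma : finType) (A : dfa Sigma) x x' w :
  dreach A x = dreach A x' -> dreach A (x ++ w) = dreach A (x' ++ w).
Proof. by rewrite /dreach !foldl_cat => ->. Qed.

Section Shortening.
Variables (Sigma Gamma : finType) (M1 M2 : transducer Sigma Gamma) (A : dfa Sigma).
Local Notation q1 := (tinit M1).
Local Notation q2 := (tinit M2).
Local Notation N := (trans_size M1 * trans_size M2 * dfa_size A).

(* Both runs defined: two loops of the product automaton within the first
   2N letters, and the corner lemma picks a shorter distinguishing word. *)
Lemma shorten_alive u :
  daccept A u -> tsem M1 u <> tsem M2 u ->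
  trun q1 u <> None -> trun q2 u <> None -> 2 * N <= size u ->
  exists v, [/\ daccept A v, tsem M1 v <> tsem M2 v & size v < size u].
Proof.
move=> acc_u neq_u alive1 alive2 long.
pose F v := (odflt q1 (reach q1 v), odflt q2 (reach q2 v), dreach A v).
have cardF : #|{: tstate M1 * tstate M2 * dstate A}| = N by rewrite !card_prod.
have le_Nu : #|{: tstate M1 * tstate M2 * dstate A}| <= size u by rewrite cardF; lia.
have [x [y [r [Eu y0 le_xy [ey1 ey2 eyA]]]]] := prefix_pigeon F le_Nu.
have le_Nr : #|{: tstate M1 * tstate M2 * dstate A}| <= size r.
  by move: long le_xy; rewrite cardF Eu catA !size_cat; nia.
have [m [z [w [Er z0 _ [ez1 ez2 ezA]]]]] := prefix_pigeon (fun v => F (x ++ y ++ v)) le_Nr.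
subst u r.
have loop_y1 := reach_loop_alive alive1 ey1.
have loop_y2 := reach_loop_alive alive2 ey2.
have loop_z1 : reach q1 (x ++ y ++ m ++ z) = reach q1 (x ++ y ++ m).
  by move: (@reach_loop_alive _ _ M1 q1 (x ++ y ++ m) z w); rewrite -!catA; apply.
have loop_z2 : reach q2 (x ++ y ++ m ++ z) = reach q2 (x ++ y ++ m).
  by move: (@reach_loop_alive _ _ M2 q2 (x ++ y ++ m) z w); rewrite -!catA; apply.
have [i [j [ij neq]]] := pump_shaped_disagree (tsem_pump alive1 loop_y1 loop_z1)
  (tsem_pump alive2 loop_y2 loop_z2) neq_u.
exists (pump x y m z w i j); split => //; last exact: size_pump_lt.
by rewrite daccept_dreach (st_pump (@dreach_congr _ A)) // -!catA.
Qed.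

(* The run of M1 dies while M2 is defined: cutting one loop of the states
   (partial for M1) keeps M1 dead, M2 defined and the word accepted. *)
Lemma shorten_dead u :
  daccept A u -> trun q1 u = None -> tsem M2 u <> None -> 2 * N <= size u ->
  exists v, [/\ daccept A v, tsem M1 v <> tsem M2 v & size v < size u].
Proof.
move=> acc_u dead1 def2 long.
pose F v := (reach q1 v, odflt q2 (reach q2 v), dreach A v).
have n1_gt0 : 0 < trans_size M1 by apply/card_gt0P; exists q1.
have cardF : #|{: option (tstate M1) * tstate M2 * dstate A}| <= 2 * N.
  by move: n1_gt0; rewrite !card_prod card_option /trans_size /dfa_size; nia.
have [x [y [w [Eu y0 _ [ey1 ey2 eyA]]]]] := prefix_pigeon F (leq_trans cardF long).
subst u; have alive2 := tsem_alive def2.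
have loop_y2 := reach_loop_alive alive2 ey2.
exists (x ++ w); split.
- by rewrite daccept_dreach -(st_cut (@dreach_congr _ A) _ eyA).
- have -> : tsem M1 (x ++ w) = None.
    apply/tsem_dead/eqP; rewrite -reach_None -(st_cut (@reach_congr _ _ M1 q1) _ ey1).
    by rewrite reach_None dead1.
  move=> /esym /eqP; rewrite -(tsem_None_reach (st_cut (@reach_congr _ _ M2 q2) _ loop_y2)).
  exact/negP/eqP.
- by rewrite !size_cat; lia.
Qed.

End Shortening.

Lemma shorten (Sigma Gamma : finType) (M1 M2 : transducer Sigma Gamma) (A : dfa Sigma) u :
  daccept A u -> tsem M1 u <> tsem M2 u ->
  2 * (trans_size M1 * trans_size M2 * dfa_size A) <= size u ->
  exists v, [/\ daccept A v, tsem M1 v <> tsem M2 v & size v < size u].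
Proof.
move=> acc_u neq_u long.
case alive1: (trun (tinit M1) u) => [?|]; case alive2: (trun (tinit M2) u) => [?|].
- by apply: shorten_alive; rewrite ?alive1 ?alive2.
- have def1 : tsem M1 u <> None by rewrite -(tsem_dead alive2).
  have [|v [acc_v neq_v lt_vu]] := shorten_dead acc_u alive2 def1.
    by rewrite (mulnC (trans_size M2)).
  by exists v; split => // /esym.
- have def2 : tsem M2 u <> None by rewrite -(tsem_dead alive1) => /esym.
  exact: shorten_dead.
- by rewrite (tsem_dead alive1) (tsem_dead alive2) in neq_u.
Qed.

Lemma short_witness (Sigma Gamma : finType) (M1 M2 : transducer Sigma Gamma)
    (A : dfa Sigma) u :
  daccept A u -> tsem M1 u <> tsem M2 u ->
  exists v, [/\ daccept A v, size v < 2 * (trans_size M1 * trans_size M2 * dfa_size A)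
              & tsem M1 v <> tsem M2 v].
Proof.
have [n] := ubnP (size u); elim: n u => // n IH u /ltnSE le_un acc_u neq_u.
case: (ltnP (size u) (2 * (trans_size M1 * trans_size M2 * dfa_size A))) => [short|long].
  by exists u.
have [v [acc_v neq_v lt_vu]] := shorten acc_u neq_u long.
exact: IH (leq_trans lt_vu le_un) acc_v neq_v.
Qed.

Lemma restrict_neq (Sigma Gamma : finType) (f g : seq Sigma -> option (seq Gamma))
    (L : pred (seq Sigma)) :
  restrict f L <> restrict g L -> exists u, L u /\ f u <> g u.
Proof.
move=> neq; apply: Classical_Prop.NNPP => no_witness; apply: neq.
apply: FunctionalExtensionality.functional_extensionality => u; rewrite /restrict.
case: ifP => // Lu; apply: Classical_Prop.NNPP => ne; apply: no_witness; by exists u.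
Qed.

Theorem mainTheorem7 (Sigma : finType) (Gamma : finType)
    (M1 M2 : transducer Sigma Gamma) (AUp : dfa Sigma) :
  restrict (@tsem _ _ M1) (daccept AUp) <> restrict (@tsem _ _ M2) (daccept AUp) ->
  exists u : seq Sigma,
    [/\ daccept AUp u,
        size u <= 2 * (trans_size M1 * trans_size M2 * dfa_size AUp) ^ 2
      & tsem M1 u <> tsem M2 u].
Proof.
move=> /restrict_neq [u [acc_u neq_u]].
have [v [acc_v short neq_v]] := short_witness acc_u neq_u.
exists v; split => //; apply: (leq_trans (ltnW short)).
by rewrite expnS expn1; nia.
Qed.
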